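(* If a tuple $v\in\mathcal{D}$ is not in the $k$-skyband $\mathcal{S}_k$ of $\mathcal{D}$, then no edge of the $k$-polygon $\mathcal{P}_k$ lies on the line $\overline{v}$; i.e., only tuples of $\mathcal{S}_k$ can form part of the $k$-polygon.
   Context: Let $\mathcal{D}\subset\mathbb{R}^2$ be a finite set of tuples in general position, $k$ a positive integer and $\tau>0$ fixed. The $k$-skyband $\mathcal{S}_k$ is the set of tuples of $\mathcal{D}$ that are not Pareto-dominated by at least $k$ other tuples, where $u$ Pareto-dominates $v$ if $u$ has strictly higher values than $v$ in both coordinates. For a tuple $v$, $\overline{v}=\{x\in\mathbb{R}^2: x\cdot v=\tau\}$; let $\mathcal{L}=\{\overline{v}:v\in\mathcal{D}\}$ and consider their arrangement (vertices = pairwise intersections, edges = segments of lines between consecutive vertices), restricted to the closed positive quadrant. The top-$k$ rank depth of a point $p$ is the number of lines of $\mathcal{L}$ intersecting the closed segment from the origin to $p$; the $k$-polygon $\mathcal{P}_k$ is the set of edges of the arrangement at depth exactly $k$. *)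

From HB Require Import structures.
From mathcomp Require Import all_boot all_order all_algebra.
From mathcomp Require Import boolp.
Set Implicit Arguments. Unset Strict Implicit. Unset Printing Implicit Defensive.
Import Order.TTheory GRing.Theory Num.Theory.
Local Open Scope ring_scope.

Section Defs.
Variable R : realFieldType.

Definition pt := (R * R)%type.

Definition dot (p u : pt) : R := p.1 * u.1 + p.2 * u.2.

Definition on_line (tau : R) (u p : pt) : Prop := dot p u = tau.

Definition inQ (p : pt) : Prop := 0 <= p.1 /\ 0 <= p.2.

Definition dominates (u v : pt) : bool := (v.1 < u.1) && (v.2 < u.2).

Definition in_skyband (D : seq pt) (k : nat) (v : pt) : bool :=
  (count (fun u => dominates u v) D < k)%N.

Definition general_position (tau : R) (D : seq pt) : Prop :=
  (forall u w, u \in D -> w \in D -> u != w -> u.1 != w.1 /\ u.2 != w.2) /\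
  (forall u w z (p : pt), u \in D -> w \in D -> z \in D ->
     u != w -> w != z -> u != z ->
     ~ (on_line tau u p /\ on_line tau w p /\ on_line tau z p)).

Definition in_seg (a b x : pt) : Prop :=
  exists t : R, 0 <= t <= 1 /\ x = ((1 - t) * a.1 + t * b.1, (1 - t) * a.2 + t * b.2).

Definition rank_depth (tau : R) (D : seq pt) (p : pt) : nat :=
  count (fun u => `[< exists x, in_seg (0, 0) p x /\ on_line tau u x >]) D.

Definition is_vertex (tau : R) (D : seq pt) (p : pt) : Prop :=
  exists u w, [/\ u \in D, w \in D, u != w, on_line tau u p & on_line tau w p].

(* q lies on the same edge (of the arrangement restricted to the closed
   positive quadrant) on line \overline{v} as the non-vertex point p:
   q is on \overline{v} in the quadrant and [p, q] contains no vertex. *)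
Definition same_edge (tau : R) (D : seq pt) (v p q : pt) : Prop :=
  [/\ inQ q, on_line tau v q & forall x, in_seg p q x -> ~ is_vertex tau D x].

(* some edge of the k-polygon P_k lies on the line \overline{v}: there is an
   edge of the arrangement on \overline{v} (the set of points q with
   same_edge p q, for a non-vertex point p of \overline{v} in the quadrant)
   all of whose points have rank depth exactly k. *)
Definition kpolygon_edge_on (tau : R) (D : seq pt) (k : nat) (v : pt) : Prop :=
  exists p, [/\ inQ p, on_line tau v p, ~ is_vertex tau D p &
    forall q, same_edge tau D v p q -> rank_depth tau D q = k].

End Defs.

From HB Require Import structures.
From mathcomp Require Import all_boot all_order all_algebra.
From mathcomp Require Import boolp.
Set Implicit Arguments. Unset Strict Implicit. Unset Printing Implicit Defensive.
Import Order.TTheory GRing.Theory Num.Theory.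
Local Open Scope ring_scope.

(* If [v] is dominated by at least [k] tuples, then at any point [p] of
   the quadrant lying on the line of [v], each dominator [u] has
   [dot p u >= dot p v = tau], so its line crosses the segment [0, p]; the line
   of [v] crosses it too (at [p]).  Hence every point of that line in the
   quadrant has depth at least [k + 1], and no edge on it has depth [k]. *)

Lemma count_lt_subpred (T : eqType) (a b : pred T) (s : seq T) (x : T) :
  subpred a b -> x \in s -> b x -> ~~ a x -> (count a s < count b s)%N.
Proof.
move=> sub_ab; elim: s => //= y s IHs; rewrite inE => /orP[/eqP <- | xs] bx nax.
  by rewrite bx (negbTE nax) add0n add1n ltnS sub_count.
rewrite -addnS leq_add ?IHs //.
by case ay: (a y); rewrite // (sub_ab _ ay).
Qed.

Section RankDepth.
Variables (R : realFieldType) (tau : R).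
Hypothesis tau_gt0 : 0 < tau.

Lemma same_edge_refl (D : seq (pt R)) (v p : pt R) :
  inQ p -> on_line tau v p -> ~ is_vertex tau D p -> same_edge tau D v p p.
Proof.
move=> Qp vp nvp; split=> // x [t [_ ->]].
by rewrite -!mulrDl subrK !mul1r; case: (p) nvp.
Qed.

(* The crossing point is the rescaling of [p] by [tau / dot p u]. *)
Lemma line_meets_seg0 (p u : pt R) :
  tau <= dot p u -> exists x, in_seg (0, 0) p x /\ on_line tau u x.
Proof.
move=> tau_le; have dp_gt0 : 0 < dot p u by apply: lt_le_trans tau_le.
set t := tau / dot p u.
exists (t * p.1, t * p.2); rewrite /on_line; split.
  exists t; split; last by rewrite /= !mulr0 !add0r.
  by rewrite /t divr_ge0 ?(ltW tau_gt0) ?(ltW dp_gt0) //= ler_pdivrMr // mul1r.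
have -> : dot (t * p.1, t * p.2) u = t * dot p u by rewrite /dot mulrDr !mulrA.
by rewrite /t mulfVK // gt_eqF.
Qed.

Lemma dot_le_dominates (p u v : pt R) :
  inQ p -> dominates u v -> dot p v <= dot p u.
Proof.
case: p => p1 p2 [/= p1_ge0 p2_ge0] /andP[lt1 lt2].
by rewrite /dot lerD // ler_wpM2l // ltW.
Qed.

Lemma dominators_lt_rank_depth (D : seq (pt R)) (v p : pt R) :
  v \in D -> inQ p -> on_line tau v p ->
  (count (fun u => dominates u v) D < rank_depth tau D p)%N.
Proof.
move=> vD Qp vp; rewrite /rank_depth; apply: (count_lt_subpred _ vD).
- move=> u dom_uv; apply/asboolP; apply: line_meets_seg0.
  by rewrite -vp; exact: dot_le_dominates.
- by apply/asboolP; apply: line_meets_seg0; rewrite vp.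
- by rewrite /dominates ltxx.
Qed.

End RankDepth.

Theorem lemma4p9 (R : realFieldType) (tau : R) (k : nat) (D : seq (pt R)) (v : pt R) :
  0 < tau -> (0 < k)%N -> uniq D -> general_position tau D ->
  v \in D -> ~~ in_skyband D k v ->
  ~ kpolygon_edge_on tau D k v.
Proof.
move=> tau_gt0 _ _ _ vD not_sky [p [Qp vp nvp depth_k]].
have := dominators_lt_rank_depth tau_gt0 vD Qp vp.
rewrite depth_k; last exact: same_edge_refl.
exact/negP.
Qed.
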